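(* In $k(Z)$ one has $k(Z)^g=k(b_2,b_3,a_2,a_3)$. More precisely, $a_j^2-b_j^3\neq 0$ for $j=2,3$ and $$u_1=x_1^2=\frac{a_2^2-b_2}{a_2^2-b_2^3}=\frac{a_3^2-b_3}{a_3^2-b_3^3}.$$
   Context: $k$ is a field of characteristic $\neq 2$ containing a primitive fourth root of unity $\sqrt{-1}$. $k(Z)=k(x_1,x_2,x_3,y_1,y_2,y_3)$ where $x_1,x_2,x_3$ are algebraically independent over $k$ and $y_i^2=x_i(x_i^2-1)$. $g$ is the automorphism of $k(Z)$ with $g^*x_i=-x_i$, $g^*y_i=\sqrt{-1}\,y_i$, and $k(Z)^g$ is its fixed field. Set $b_j=x_j/x_1$, $a_j=y_j/y_1$ ($j=2,3$). *)

From HB Require Import structures.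
From mathcomp Require Import all_boot all_order all_algebra.
Set Implicit Arguments. Unset Strict Implicit. Unset Printing Implicit Defensive.
Import Order.TTheory GRing.Theory Num.Theory.
Local Open Scope ring_scope.

Definition subfield_closed (K : fieldType) (P : K -> Prop) : Prop :=
  [/\ P 1,
      (forall a b, P a -> P b -> P (a - b)),
      (forall a b, P a -> P b -> P (a * b)) &
      (forall a, P a -> P a^-1)].

(* z lies in the subfield of K generated by iota(k) and the elements of S,
   i.e. z belongs to k(S) (k embedded in K via iota). *)
Definition in_gen_field (k K : fieldType) (iota : k -> K) (S : seq K) (z : K)
  : Prop :=
  forall P : K -> Prop, subfield_closed P -> (forall c, P (iota c)) ->
    (forall s, s \in S -> P s) -> P z.

(* Evaluation of a polynomial in three variables over k (encoded as an
   iterated univariate polynomial) at (x1, x2, x3) in K. *)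
Definition eval3 (k K : fieldType) (iota : {rmorphism k -> K})
  (x1 x2 x3 : K) (P : {poly {poly {poly k}}}) : K :=
  let f1 := fun r : {poly k} => (map_poly iota r).[x1] in
  let f2 := fun q : {poly {poly k}} => (map_poly f1 q).[x2] in
  (map_poly f2 P).[x3].

Definition alg_indep3 (k K : fieldType) (iota : {rmorphism k -> K})
  (x1 x2 x3 : K) : Prop :=
  forall P : {poly {poly {poly k}}}, eval3 iota x1 x2 x3 P = 0 -> P = 0.

From HB Require Import structures.
From mathcomp Require Import all_boot all_order all_algebra.
From mathcomp Require Import ring.
Set Implicit Arguments. Unset Strict Implicit. Unset Printing Implicit Defensive.
Import Order.TTheory GRing.Theory Num.Theory.
Local Open Scope ring_scope.

(* Let L = k(b2, b3, a2, a3), viewed inside K = k(Z).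
   - Algebraic independence of x1, x2, x3 gives x1 - c <> 0 for constants c,
     x2, x3 <> 0 and x_j <> +-x1.  With y^2 = x (x^2 - 1) one computes
     a_j^2 - b_j^3 = x_j (x_j^2 - x1^2) / (x1^3 (x1^2 - 1)) <> 0, whence
     u1 = x1^2 = (a_j^2 - b_j) / (a_j^2 - b_j^3); in particular u1 lies in L.
   - g fixes k and scales numerator and denominator of each b_j (by -1) and
     a_j (by sqrt(-1)) alike, so g fixes L.
   - Kummer-type descent (section KummerDescent): if L contains I = sqrt(-1),
     x^2 and q, and y^2 = x q, then L + Lx + Ly + Lxy is closed under the
     field operations; an automorphism g fixing L with g x = -x, g y = I y
     has order 4 on it and trace w + g w + g^2 w + g^3 w = 4a for
     w = a + bx + cy + dxy, so the g-fixed elements of this span are in L.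
   - K is generated over k by x1, b2 x1, b3 x1, y1, a2 y1, a3 y1, which all lie
     in L + Lx1 + Ly1 + Lx1y1; so K^g = L. *)

Section SubfieldClosed.
Variables (K : fieldType) (P : K -> Prop).
Hypothesis hP : subfield_closed P.

Lemma subfield1 : P 1.
Proof. by case: hP. Qed.

Lemma subfieldB a b : P a -> P b -> P (a - b).
Proof. by case: hP => _ h _ _; apply: h. Qed.

Lemma subfieldM a b : P a -> P b -> P (a * b).
Proof. by case: hP => _ _ h _; apply: h. Qed.

Lemma subfieldV a : P a -> P a^-1.
Proof. by case: hP => _ _ _ h; apply: h. Qed.

Lemma subfield0 : P 0.
Proof. by rewrite -(subrr 1); apply: subfieldB subfield1 subfield1. Qed.

Lemma subfieldN a : P a -> P (- a).
Proof. by move=> ha; rewrite -sub0r; apply: subfieldB subfield0 ha. Qed.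

Lemma subfieldD a b : P a -> P b -> P (a + b).
Proof. by move=> ha hb; rewrite -[b]opprK; apply: subfieldB ha (subfieldN hb). Qed.

Lemma subfieldX a n : P a -> P (a ^+ n).
Proof.
move=> ha; elim: n => [|n IH]; first by rewrite expr0; apply: subfield1.
by rewrite exprS; apply: subfieldM.
Qed.

Lemma subfield_div a b : P a -> P b -> P (a / b).
Proof. by move=> ha hb; apply: subfieldM ha (subfieldV hb). Qed.

End SubfieldClosed.

Section GeneratedField.
Variables (k K : fieldType) (iota : k -> K) (S : seq K).

Lemma in_gen_field_closed : subfield_closed (in_gen_field iota S).
Proof.
split=> [P hP _ _ | a b ha hb P hP hk hS | a b ha hb P hP hk hS | a ha P hP hk hS].
- exact: subfield1.
- exact: subfieldB (ha P hP hk hS) (hb P hP hk hS).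
- exact: subfieldM (ha P hP hk hS) (hb P hP hk hS).
- exact: subfieldV (ha P hP hk hS).
Qed.

Lemma in_gen_field_const c : in_gen_field iota S (iota c).
Proof. by move=> P _ hk _. Qed.

Lemma in_gen_field_gen s : s \in S -> in_gen_field iota S s.
Proof. by move=> sS P _ _ hS; apply: hS. Qed.

Lemma in_gen_field_fixed (g : {rmorphism K -> K}) :
  (forall c, g (iota c) = iota c) -> (forall s, s \in S -> g s = s) ->
  forall z, in_gen_field iota S z -> g z = z.
Proof.
move=> gk gS z hz; apply: (hz (fun w => g w = w)) => //.
split=> [|a b ha hb|a b ha hb|a ha]; first exact: rmorph1.
- by rewrite rmorphB ha hb.
- by rewrite rmorphM ha hb.
- by rewrite fmorphV ha.
Qed.

End GeneratedField.

Lemma rmorph_fix_ratio (K : fieldType) (g : {rmorphism K -> K}) (s u v : K) :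
  s != 0 -> g u = s * u -> g v = s * v -> g (u / v) = u / v.
Proof. by move=> ns gu gv; rewrite fmorph_div gu gv invfM mulrACA divff // mul1r. Qed.

Lemma rmorph_fix_ratioN (K : fieldType) (g : {rmorphism K -> K}) (u v : K) :
  g u = - u -> g v = - v -> g (u / v) = u / v.
Proof.
by move=> gu gv; apply: (@rmorph_fix_ratio _ _ (-1)); rewrite ?mulN1r ?oppr_eq0 ?oner_eq0.
Qed.

(* Algebraic independence: explicit nonzero polynomials do not vanish at
   (x1, x2, x3).  eval3_morph is eval3 packaged as a ring morphism (the two
   agree definitionally), which makes the evaluations computable. *)
Section Independence.
Variables (k K : fieldType) (iota : {rmorphism k -> K}) (x1 x2 x3 : K).
Hypothesis hindep : alg_indep3 iota x1 x2 x3.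

Definition eval3_morph : {rmorphism {poly {poly {poly k}}} -> K} :=
  let f1 : {rmorphism {poly k} -> K} := (horner_eval x1 \o map_poly iota)%FUN in
  let f2 : {rmorphism {poly {poly k}} -> K} := (horner_eval x2 \o map_poly f1)%FUN in
  (horner_eval x3 \o map_poly f2)%FUN.

Lemma eval3_nonzero P : P != 0 -> eval3_morph P != 0.
Proof. by apply: contra => /eqP /hindep ->. Qed.

Lemma eval3_const c : eval3_morph c%:P%:P%:P = iota c.
Proof.
by rewrite /= horner_evalE map_polyC hornerC /= horner_evalE map_polyC hornerC
  /= horner_evalE map_polyC hornerC.
Qed.

Lemma eval3_X1 : eval3_morph 'X%:P%:P = x1.
Proof.
by rewrite /= horner_evalE map_polyC hornerC /= horner_evalE map_polyC hornerC
  /= horner_evalE map_polyX hornerX.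
Qed.

Lemma eval3_X2 : eval3_morph 'X%:P = x2.
Proof.
by rewrite /= horner_evalE map_polyC hornerC /= horner_evalE map_polyX hornerX.
Qed.

Lemma eval3_X3 : eval3_morph 'X = x3.
Proof. by rewrite /= horner_evalE map_polyX hornerX. Qed.

Lemma x1_sub_const_neq0 c : x1 - iota c != 0.
Proof.
rewrite -eval3_X1 -eval3_const -rmorphB -!polyCB.
by apply: eval3_nonzero; rewrite !polyC_eq0 polyXsubC_eq0.
Qed.

Lemma x1_neq0 : x1 != 0.
Proof. by have := x1_sub_const_neq0 0; rewrite rmorph0 subr0. Qed.

Lemma x1_sq_sub1_neq0 : x1 ^+ 2 - 1 != 0.
Proof.
have := mulf_neq0 (x1_sub_const_neq0 1) (x1_sub_const_neq0 (-1)).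
by rewrite rmorphN1 rmorph1 opprK -subr_sqr expr1n.
Qed.

Lemma x2_neq0 : x2 != 0.
Proof. by rewrite -eval3_X2; apply: eval3_nonzero; rewrite polyC_eq0 polyX_eq0. Qed.

Lemma x3_neq0 : x3 != 0.
Proof. by rewrite -eval3_X3; apply: eval3_nonzero; rewrite polyX_eq0. Qed.

Lemma x2_sub_const_x1_neq0 s : x2 - iota s * x1 != 0.
Proof.
rewrite -eval3_X2 -eval3_X1 -eval3_const -rmorphM -rmorphB -!polyCM -polyCB.
by apply: eval3_nonzero; rewrite polyC_eq0 polyXsubC_eq0.
Qed.

Lemma x3_sub_const_x1_neq0 s : x3 - iota s * x1 != 0.
Proof.
rewrite -eval3_X3 -eval3_X1 -eval3_const -rmorphM -rmorphB -!polyCM.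
by apply: eval3_nonzero; rewrite polyXsubC_eq0.
Qed.

End Independence.

Lemma neq_pm_of_not_multiple (k K : fieldType) (iota : {rmorphism k -> K}) (u v : K) :
  (forall s, u - iota s * v != 0) -> u - v != 0 /\ u + v != 0.
Proof.
move=> huv; split; first by have := huv 1; rewrite rmorph1 mul1r.
by have := huv (-1); rewrite rmorphN1 mulN1r opprK.
Qed.

Lemma ratio_curve_identity (K : fieldType) (x1 y1 x y : K) :
  x1 != 0 -> x1 ^+ 2 - 1 != 0 ->
  y1 ^+ 2 = x1 * (x1 ^+ 2 - 1) -> y ^+ 2 = x * (x ^+ 2 - 1) ->
  (y / y1) ^+ 2 - (x / x1) ^+ 3 = x * (x - x1) * (x + x1) / (x1 ^+ 3 * (x1 ^+ 2 - 1)).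
Proof.
move=> nx1 nq hy1 hy; rewrite expr_div_n hy hy1.
by field; rewrite nx1 nq.
Qed.

Lemma ratio_formula (K : fieldType) (x1 y1 x y : K) :
  x1 != 0 -> x1 ^+ 2 - 1 != 0 ->
  y1 ^+ 2 = x1 * (x1 ^+ 2 - 1) -> y ^+ 2 = x * (x ^+ 2 - 1) ->
  x != 0 -> x - x1 != 0 -> x + x1 != 0 ->
  (y / y1) ^+ 2 - (x / x1) ^+ 3 != 0 /\
  x1 ^+ 2 = ((y / y1) ^+ 2 - x / x1) / ((y / y1) ^+ 2 - (x / x1) ^+ 3).
Proof.
move=> nx1 nq hy1 hy nx nm np.
have hD := ratio_curve_identity nx1 nq hy1 hy.
have nD : (y / y1) ^+ 2 - (x / x1) ^+ 3 != 0.
  by rewrite hD !mulf_neq0 ?invr_eq0 ?mulf_neq0 ?expf_neq0.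
split=> //; apply: (mulIf nD); rewrite divfK // hD expr_div_n hy hy1.
by field; rewrite nx1 nq.
Qed.

Section KummerDescent.
Variables (K : fieldType) (L : K -> Prop) (x y q I : K) (g : {rmorphism K -> K}).
Hypotheses (Lsub : subfield_closed L) (Lx2 : L (x ^+ 2)) (Lq : L q) (LI : L I).
Hypotheses (hy : y ^+ 2 = x * q) (hI : I ^+ 2 = -1) (h2 : (2 : K) != 0).
Hypotheses (gL : forall a, L a -> g a = a) (gx : g x = - x) (gy : g y = I * y).

Definition span4 (a b c d : K) : K := a + b * x + c * y + d * (x * y).

Definition in_span (z : K) : Prop :=
  exists a b c d, [/\ L a, L b, L c, L d & z = span4 a b c d].

Lemma in_span_L a : L a -> in_span a.
Proof.
move=> ha; exists a, 0, 0, 0.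
by split; try exact: (subfield0 Lsub); rewrite // /span4; ring.
Qed.

Lemma in_span_x : in_span x.
Proof.
exists 0, 1, 0, 0; split; try exact: (subfield0 Lsub); try exact: (subfield1 Lsub).
by rewrite /span4; ring.
Qed.

Lemma in_span_y : in_span y.
Proof.
exists 0, 0, 1, 0; split; try exact: (subfield0 Lsub); try exact: (subfield1 Lsub).
by rewrite /span4; ring.
Qed.

Lemma in_span_B w w' : in_span w -> in_span w' -> in_span (w - w').
Proof.
move=> [a [b [c [d [ha hb hc hd ->]]]]] [a' [b' [c' [d' [ha' hb' hc' hd' ->]]]]].
exists (a - a'), (b - b'), (c - c'), (d - d').
by split; try apply: (subfieldB Lsub); rewrite // /span4; ring.
Qed.

Lemma in_span_D w w' : in_span w -> in_span w' -> in_span (w + w').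
Proof.
move=> [a [b [c [d [ha hb hc hd ->]]]]] [a' [b' [c' [d' [ha' hb' hc' hd' ->]]]]].
exists (a + a'), (b + b'), (c + c'), (d + d').
by split; try apply: (subfieldD Lsub); rewrite // /span4; ring.
Qed.

Lemma in_span_scale s w : L s -> in_span w -> in_span (s * w).
Proof.
move=> hs [a [b [c [d [ha hb hc hd ->]]]]].
exists (s * a), (s * b), (s * c), (s * d).
by split; try apply: (subfieldM Lsub); rewrite // /span4; ring.
Qed.

(* Multiplication by x and y permutes the four coordinates, up to factors x^2
   and q in L. *)
Lemma in_span_mulx w : in_span w -> in_span (x * w).
Proof.
move=> [a [b [c [d [ha hb hc hd ->]]]]].
exists (b * x ^+ 2), a, (d * x ^+ 2), c.
by split; try apply: (subfieldM Lsub); rewrite // /span4; ring.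
Qed.

Lemma in_span_muly w : in_span w -> in_span (y * w).
Proof.
move=> [a [b [c [d [ha hb hc hd ->]]]]].
exists (d * x ^+ 2 * q), (c * q), a, b.
split=> //; do ?apply: (subfieldM Lsub) => //.
have -> : y * span4 a b c d = a * y + b * (x * y) + (c + d * x) * y ^+ 2.
  by rewrite /span4; ring.
by rewrite hy /span4; ring.
Qed.

Lemma in_span_M w w' : in_span w -> in_span w' -> in_span (w * w').
Proof.
move=> [a [b [c [d [ha hb hc hd ->]]]]] hw'.
have -> : span4 a b c d * w' =
    a * w' + b * (x * w') + c * (y * w') + d * (x * (y * w')).
  by rewrite /span4; ring.
by do !apply: in_span_D; apply: in_span_scale => //;
  do ?[apply: in_span_mulx | apply: in_span_muly].
Qed.

Lemma iter_g_span4 n a b c d : L a -> L b -> L c -> L d ->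
  iter n g (span4 a b c d) =
  span4 a ((-1) ^+ n * b) (I ^+ n * c) ((- I) ^+ n * d).
Proof.
move=> ha hb hc hd; elim: n => [|n IH]; first by rewrite /span4 !expr0 !mul1r.
have gI : g I = I by apply: gL.
rewrite iterS IH /span4 !rmorphD !rmorphM !rmorphXn rmorphN1 rmorphN gI.
by rewrite gx gy !gL // !exprS; ring.
Qed.

Lemma g_order4 w : in_span w -> g (g (g (g w))) = w.
Proof.
move=> [a [b [c [d [ha hb hc hd ->]]]]].
have -> : g (g (g (g (span4 a b c d)))) = iter 4 g (span4 a b c d) by [].
have I4 : I ^+ 4 = 1 by rewrite (exprM I 2 2) hI sqrrN expr1n.
have neg4 z : (- z) ^+ 4 = z ^+ 4 by rewrite !(exprM _ 2 2) sqrrN.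
by rewrite iter_g_span4 // !neg4 expr1n I4 !mul1r.
Qed.

Lemma g_trace a b c d : L a -> L b -> L c -> L d ->
  let w := span4 a b c d in w + g w + g (g w) + g (g (g w)) = 4 * a.
Proof.
move=> ha hb hc hd w.
have -> : w + g w + g (g w) + g (g (g w)) =
    iter 0 g w + iter 1 g w + iter 2 g w + iter 3 g w by [].
rewrite !iter_g_span4 // /span4 (exprS I 2) (exprS (- I) 2) !sqrrN hI.
by ring.
Qed.

(* Fixed points: g w = w forces 4w = 4a, i.e. w = a lies in L. *)
Lemma in_span_fixed w : in_span w -> g w = w -> L w.
Proof.
move=> [a [b [c [d [ha hb hc hd def_w]]]]] gw.
have := g_trace ha hb hc hd; rewrite /= -def_w !gw => h4w.
have n4 : (4 : K) != 0 by rewrite (_ : 4 = 2 * 2) ?mulf_neq0 // -natrM.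
suff -> : w = a by [].
by apply: (mulfI n4); rewrite -h4w; ring.
Qed.

Lemma in_span_g w : in_span w -> in_span (g w).
Proof.
move=> [a [b [c [d [ha hb hc hd ->]]]]].
have := iter_g_span4 1 ha hb hc hd; rewrite /= => ->.
exists a, ((-1) ^+ 1 * b), (I ^+ 1 * c), ((- I) ^+ 1 * d).
by split; do ?[apply: (subfieldM Lsub) | apply: (subfieldX Lsub) |
  apply: (subfieldN Lsub) | apply: (subfield1 Lsub)].
Qed.

(* Inverses: w^-1 = (g w g^2 w g^3 w) / N(w), where the norm N(w) is g-fixed,
   hence in L. *)
Lemma in_span_V w : in_span w -> in_span w^-1.
Proof.
move=> hw; have [->|nw] := eqVneq w 0.
  by rewrite invr0; apply/in_span_L/(subfield0 Lsub).
set w1 := g w; set w2 := g w1; set w3 := g w2.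
have hw1 : in_span w1 by apply: in_span_g.
have hw2 : in_span w2 by apply: in_span_g.
have hw3 : in_span w3 by apply: in_span_g.
have LN : L (w * w1 * w2 * w3).
  apply: in_span_fixed; first by do !apply: in_span_M.
  by rewrite !rmorphM /w3 /w2 /w1 g_order4 //; ring.
have -> : w^-1 = (w * w1 * w2 * w3)^-1 * (w1 * w2 * w3).
  by field; rewrite nw !fmorph_eq0 nw.
by apply: in_span_scale; [apply: (subfieldV Lsub) | do !apply: in_span_M].
Qed.

Lemma in_span_closed : subfield_closed in_span.
Proof.
split; [apply: in_span_L; exact: (subfield1 Lsub) | exact: in_span_B |
  exact: in_span_M | exact: in_span_V].
Qed.

Lemma fixed_iff_in_L (k : fieldType) (iota : k -> K) (S : seq K) :
  (forall c, L (iota c)) -> (forall s, s \in S -> in_span s) ->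
  (forall z, in_gen_field iota S z) -> forall z, g z = z <-> L z.
Proof.
move=> Lk spanS gen z; split=> [gz|/gL //].
apply: in_span_fixed gz; apply: gen in_span_closed _ spanS => c.
exact: in_span_L.
Qed.

Lemma in_span_ratio u v : v != 0 -> L (u / v) -> in_span v -> in_span u.
Proof. by move=> nv Luv hv; rewrite -(divfK nv u); apply: in_span_scale. Qed.

End KummerDescent.

Section CurvePoints.
Variables (k K : fieldType) (iota : {rmorphism k -> K}) (x1 x2 x3 y1 y2 y3 : K).
Hypotheses (hindep : alg_indep3 iota x1 x2 x3) (hy1 : y1 ^+ 2 = x1 * (x1 ^+ 2 - 1)).
Hypotheses (hy2 : y2 ^+ 2 = x2 * (x2 ^+ 2 - 1)) (hy3 : y3 ^+ 2 = x3 * (x3 ^+ 2 - 1)).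

Lemma y1_neq0 : y1 != 0.
Proof.
apply: contra_eq_neq hy1 => ->; rewrite expr0n eq_sym.
by rewrite mulf_neq0 ?(x1_neq0 hindep) ?(x1_sq_sub1_neq0 hindep).
Qed.

Lemma ratio_formula2 :
  (y2 / y1) ^+ 2 - (x2 / x1) ^+ 3 != 0 /\
  x1 ^+ 2 = ((y2 / y1) ^+ 2 - x2 / x1) / ((y2 / y1) ^+ 2 - (x2 / x1) ^+ 3).
Proof.
have [nm np] := neq_pm_of_not_multiple (x2_sub_const_x1_neq0 hindep).
exact: ratio_formula (x1_neq0 hindep) (x1_sq_sub1_neq0 hindep) hy1 hy2 (x2_neq0 hindep) nm np.
Qed.

Lemma ratio_formula3 :
  (y3 / y1) ^+ 2 - (x3 / x1) ^+ 3 != 0 /\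
  x1 ^+ 2 = ((y3 / y1) ^+ 2 - x3 / x1) / ((y3 / y1) ^+ 2 - (x3 / x1) ^+ 3).
Proof.
have [nm np] := neq_pm_of_not_multiple (x3_sub_const_x1_neq0 hindep).
exact: ratio_formula (x1_neq0 hindep) (x1_sq_sub1_neq0 hindep) hy1 hy3 (x3_neq0 hindep) nm np.
Qed.

End CurvePoints.

Theorem mainTheorem5
  (k K : fieldType) (iota : {rmorphism k -> K})
  (hchar : (2%:R : k) != 0)
  (i : k) (hi : i ^+ 2 = -1)
  (x1 x2 x3 y1 y2 y3 : K)
  (hindep : alg_indep3 iota x1 x2 x3)
  (hy1 : y1 ^+ 2 = x1 * (x1 ^+ 2 - 1))
  (hy2 : y2 ^+ 2 = x2 * (x2 ^+ 2 - 1))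
  (hy3 : y3 ^+ 2 = x3 * (x3 ^+ 2 - 1))
  (hgen : forall z : K, in_gen_field iota [:: x1; x2; x3; y1; y2; y3] z)
  (g : {rmorphism K -> K}) (hgbij : bijective g)
  (hgk : forall c : k, g (iota c) = iota c)
  (hgx1 : g x1 = - x1) (hgx2 : g x2 = - x2) (hgx3 : g x3 = - x3)
  (hgy1 : g y1 = iota i * y1) (hgy2 : g y2 = iota i * y2)
  (hgy3 : g y3 = iota i * y3) :
  let b2 := x2 / x1 in let b3 := x3 / x1 in
  let a2 := y2 / y1 in let a3 := y3 / y1 in
  [/\ (forall z : K, g z = z <-> in_gen_field iota [:: b2; b3; a2; a3] z),
      a2 ^+ 2 - b2 ^+ 3 != 0,
      a3 ^+ 2 - b3 ^+ 3 != 0,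
      x1 ^+ 2 = (a2 ^+ 2 - b2) / (a2 ^+ 2 - b2 ^+ 3) &
      x1 ^+ 2 = (a3 ^+ 2 - b3) / (a3 ^+ 2 - b3 ^+ 3)].
Proof.
move=> b2 b3 a2 a3.
have [nD2 hu2] := ratio_formula2 hindep hy1 hy2.
have [nD3 hu3] := ratio_formula3 hindep hy1 hy3.
split=> //.
pose L := in_gen_field iota [:: b2; b3; a2; a3].
have Lsub : subfield_closed L := in_gen_field_closed _ _.
have [Lb2 Lb3 La2 La3] : [/\ L b2, L b3, L a2 & L a3].
  by split; apply: in_gen_field_gen; rewrite !inE eqxx ?orbT.
have Lx2 : L (x1 ^+ 2).
  rewrite hu2 -/b2 -/a2; apply: (subfield_div Lsub);
  by apply: (subfieldB Lsub); try apply: (subfieldX Lsub).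
have Lq : L (x1 ^+ 2 - 1) by apply: (subfieldB Lsub) Lx2 (subfield1 Lsub).
have LI : L (iota i) by apply: in_gen_field_const.
have hI : iota i ^+ 2 = -1 by rewrite -rmorphXn hi rmorphN1.
have nI : iota i != 0.
  by apply: contra_eq_neq hI => ->; rewrite expr0n eq_sym oppr_eq0 oner_eq0.
have h2 : (2 : K) != 0 by rewrite -(rmorph_nat iota) fmorph_eq0.
have gL a : L a -> g a = a.
  move=> La; apply: (in_gen_field_fixed hgk _ La) => w.
  rewrite !inE => /or4P[] /eqP ->.
  - exact: rmorph_fix_ratioN hgx2 hgx1.
  - exact: rmorph_fix_ratioN hgx3 hgx1.
  - exact: rmorph_fix_ratio nI hgy2 hgy1.
  - exact: rmorph_fix_ratio nI hgy3 hgy1.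
have nx1 := x1_neq0 hindep; have ny1 := y1_neq0 hindep hy1.
have [Sx1 Sy1] := (in_span_x x1 y1 Lsub, in_span_y x1 y1 Lsub).
apply: (fixed_iff_in_L Lsub Lx2 Lq LI hy1 hI h2 gL hgx1 hgy1 _ _ hgen) => [c|w].
  exact: in_gen_field_const.
rewrite !inE => /orP[/eqP->|/orP[/eqP->|/orP[/eqP->|/orP[/eqP->|/orP[/eqP->|/eqP->]]]]] //.
- exact: in_span_ratio nx1 Lb2 Sx1.
- exact: in_span_ratio nx1 Lb3 Sx1.
- exact: in_span_ratio ny1 La2 Sy1.
- exact: in_span_ratio ny1 La3 Sy1.
Qed.
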